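(* Let $n,N,L\ge1$ be integers and $0<p<1$. In the random model described in the context, for a read $(\mathbf{y},\mathbf{d}')\in\mathcal{Y}$ whose address part $\mathbf{y}$ has exactly $r$ erased positions, $$\mathbb{E}\big[|\mathcal{N}_{(\mathbf{y},\mathbf{d}')}|\;\big|\;(\mathbf{y},\mathbf{d}')\big]=N2^r(1+p)^{n-r}-1.$$ Further, $\mathbb{E}\big[|\mathcal{N}_{(\mathbf{y},\mathbf{d}')}|\big]=N(1+2p-p^2)^{n}-1$.
   Context: Model: Let $M=2^n$ and $C=\{0,1\}^n$ (addresses). Data parts are independent and uniform on $\{0,1\}^L$; each address $\mathbf{x}\in C$ carries one strand $(\mathbf{x},\mathbf{d})$. Each strand is transmitted $N$ times through $\mathsf{BEC}(p)$ (each symbol independently replaced by $*$ with probability $p$, independently across transmissions and strands); $\mathcal{Y}$ is the multiset of all $MN$ reads $(\mathbf{y},\mathbf{d}')$. An address $\mathbf{x}$ is compatible with a read $(\mathbf{y},\mathbf{d}')$ if $\mathbf{x}$ and $\mathbf{y}$ coincide at all non-erased positions of $\mathbf{y}$. The bipartite graph $\mathcal{G}$ has left vertices $C$, right vertices $\mathcal{Y}$, and an edge between $\mathbf{x}$ and $(\mathbf{y},\mathbf{d}')$ iff $\mathbf{x}$ is compatible with $(\mathbf{y},\mathbf{d}')$. The two-hop neighbourhood $\mathcal{N}_{(\mathbf{y},\mathbf{d}')}$ is the multiset of reads other than $(\mathbf{y},\mathbf{d}')$ itself that share at least one left neighbour with $(\mathbf{y},\mathbf{d}')$ in $\mathcal{G}$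 (equivalently, whose address part coincides with $\mathbf{y}$ at all positions where neither is erased). *)

(* Finite (discrete) probability space for the DNA-storage
   model: addresses C = {0,1}^n, data parts uniform on {0,1}^L, each of the
   M = 2^n strands read N times through BEC(p). *)
From mathcomp Require Import all_boot all_order all_algebra.
Set Implicit Arguments. Unset Strict Implicit. Unset Printing Implicit Defensive.
Import Order.TTheory GRing.Theory Num.Theory.
Local Open Scope ring_scope.

Section Model.
Variables (n N L : nat).

Definition addr := {ffun 'I_n -> bool}.
(* a received symbol: None is the erasure symbol * *)
Definition rsym := option bool.
Definition read := ({ffun 'I_n -> rsym} * {ffun 'I_L -> rsym})%type.
(* index of a read in the multiset Y: (address of the strand, transmission) *)
Definition ridx := (addr * 'I_N)%type.

(* sample space: data parts of every strand, erasure indicators for every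
   address / data symbol of every transmission of every strand *)
Definition outcome :=
  ({ffun addr -> {ffun 'I_L -> bool}} *
   {ffun ridx -> {ffun 'I_n -> bool}} *
   {ffun ridx -> {ffun 'I_L -> bool}})%type.

Definition data_of (w : outcome) := w.1.1.
Definition eraseA (w : outcome) := w.1.2.
Definition eraseD (w : outcome) := w.2.

Definition read_of (w : outcome) (j : ridx) : read :=
  ([ffun i => if eraseA w j i then None else Some (j.1 i)],
   [ffun i => if eraseD w j i then None else Some (data_of w j.1 i)]).

Definition compat (x : addr) (y : {ffun 'I_n -> rsym}) : bool :=
  [forall i, (y i == None) || (y i == Some (x i))].

(* size of the two-hop neighbourhood of read j in the graph G: number of
   reads (other than j itself) sharing at least one left neighbour with j *)
Definition nbhd_size (w : outcome) (j : ridx) : nat :=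
  #|[set j' : ridx | (j' != j) &&
       [exists x : addr, compat x (read_of w j').1 && compat x (read_of w j).1]]|.

Definition n_erased (v : read) : nat := #|[set i | v.1 i == None]|.

Variable R : realFieldType.
Variable p : R.

Definition bern (b : bool) : R := if b then p else 1 - p.

Definition weight (w : outcome) : R :=
  \prod_(x : addr) (2 ^+ L)^-1 *
  \prod_(j : ridx) ((\prod_(i < n) bern (eraseA w j i)) *
                    (\prod_(i < L) bern (eraseD w j i))).

Definition Pr (E : pred outcome) : R := \sum_(w | E w) weight w.
Definition Expect (X : outcome -> R) : R := \sum_w weight w * X w.
Definition CondExpect (X : outcome -> R) (E : pred outcome) : R :=
  (\sum_(w | E w) weight w * X w) / Pr E.

End Model.

(* A read j' is a two-hop neighbour of j exactly when, at every address
   position, one of the two reads is erased or the two strand addresses agree;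
   so the neighbourhood depends only on the address erasure patterns, which are
   independent of everything else. Given the pattern e of j (with address x),
   a read of strand x' is therefore a neighbour with probability
   prod_k (p + (1 - p) [e_k or x'_k = x_k]). Summing over x' coordinatewise
   gives a factor 2 at erased and 1 + p at unerased positions, times N for the
   transmissions, and j itself contributes 1. Averaging over e, each position
   contributes 2p + (1 - p)(1 + p) = 1 + 2p - p^2. Both identities are
   polynomial in p. *)

From mathcomp Require Import all_boot all_order all_algebra.
From mathcomp Require Import ring.
Import Order.TTheory GRing.Theory Num.Theory.
Set Implicit Arguments. Unset Strict Implicit. Unset Printing Implicit Defensive.
Local Open Scope ring_scope.

Section ProductSums.
Variable R : comNzRingType.

Lemma sum_ffun_fixed (I J : finType) (G : I -> J -> R) (i0 : I) (a : J) :
  \sum_(f : {ffun I -> J} | f i0 == a) \prod_(i | i != i0) G i (f i) =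
  \prod_(i | i != i0) \sum_b G i b.
Proof.
pose H i b := if i == i0 then (b == a)%:R else G i b.
have H_off i : i != i0 -> H i = G i by rewrite /H => /negbTE->.
transitivity (\sum_(f : {ffun I -> J}) \prod_i H i (f i)).
  rewrite big_mkcond /=; apply: eq_bigr => f _.
  rewrite [RHS](bigD1 i0) //= {1}/H eqxx.
  rewrite (eq_bigr _ (fun i ne => congr1 (@^~ (f i)) (H_off i ne))).
  by case: (f i0 == a); rewrite ?mul1r ?mul0r.
rewrite -bigA_distr_bigA (bigD1 i0) //= {1}/H eqxx.
rewrite (bigD1 a) //= eqxx big1 ?addr0 ?mul1r => [|b /negbTE-> //].
by apply: eq_bigr => i /H_off->.
Qed.

Lemma natr_forall (I : finType) (P : pred I) :
  ([forall i, P i])%:R = \prod_i (P i)%:R :> R.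
Proof.
have [/forallP allP | /forallPn [i Ni]] := boolP [forall i, P i].
  by rewrite big1 // => i _; rewrite allP.
by rewrite (bigD1 i) //= (negbTE Ni) mul0r.
Qed.

Lemma prod_if_card (I : finType) (P : pred I) (x y : R) :
  \prod_i (if P i then x else y) =
  x ^+ #|[set i | P i]| * y ^+ (#|I| - #|[set i | P i]|).
Proof.
rewrite big_if /= !prodr_const cardsE -(cardC P) addKn.
by congr (_ * _ ^+ _); apply: eq_card.
Qed.

Section Weights.
Variables (J : finType) (F : J -> R).
Hypothesis F_sum1 : \sum_b F b = 1.

Lemma sum_ffun_prod_eq1 (I : finType) :
  \sum_(f : {ffun I -> J}) \prod_i F (f i) = 1.
Proof. by rewrite -(bigA_distr_bigA (fun _ : I => F)) big1. Qed.

Lemma sum_ffun_prod_fixed (I : finType) (i0 : I) (a : J) :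
  \sum_(f : {ffun I -> J} | f i0 == a) \prod_i F (f i) = F a.
Proof.
under eq_bigr => f /eqP fa do rewrite (bigD1 i0) //= fa.
by rewrite -mulr_sumr (sum_ffun_fixed (fun _ : I => F)) big1 ?mulr1.
Qed.

Lemma sum_ffun_prod_fixed_mul (I : finType) (i0 i1 : I) (a : J) (g : J -> R) :
  i1 != i0 ->
  \sum_(f : {ffun I -> J} | f i0 == a) \prod_i F (f i) * g (f i1) =
  F a * \sum_b F b * g b.
Proof.
move=> i10; pose G i b := F b * (if i == i1 then g b else 1).
have G_off i b : i != i1 -> G i b = F b by rewrite /G => /negbTE->; rewrite mulr1.
have G_i1 b : G i1 b = F b * g b by rewrite /G eqxx.
under eq_bigr => f /eqP fa.
  rewrite (bigD1 i0) //= fa -mulrA.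
  have -> : \prod_(i | i != i0) F (f i) * g (f i1) = \prod_(i | i != i0) G i (f i).
    rewrite (bigD1 i1 i10) [RHS](bigD1 i1 i10) /= G_i1 mulrAC; congr (_ * _).
    by apply: eq_bigr => i /andP[_ /G_off->].
  over.
rewrite -mulr_sumr sum_ffun_fixed (bigD1 i1 i10) /= [X in _ * (_ * X)]big1 ?mulr1.
  by under eq_bigr do rewrite G_i1.
by move=> i /andP[_ ne]; under eq_bigr do rewrite G_off //.
Qed.

End Weights.
End ProductSums.

Lemma sum_triple (R : nmodType) (A B C : finType) (F : A * B * C -> R) :
  \sum_w F w = \sum_a \sum_b \sum_c F (a, b, c).
Proof.
rewrite pair_bigA (pair_bigA _ (fun ab c => F (ab.1, ab.2, c))) /=.
by apply: eq_bigr => -[[a b] c].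
Qed.

Section Model.
Variables (R : realFieldType) (p : R) (n N L : nat).

Local Notation data_parts := {ffun addr n -> {ffun 'I_L -> bool}}.
Local Notation addr_erasures := {ffun ridx n N -> {ffun 'I_n -> bool}}.
Local Notation data_erasures := {ffun ridx n N -> {ffun 'I_L -> bool}}.

Definition agree_unerased (x y : addr n) (e f : {ffun 'I_n -> bool}) : bool :=
  [forall k, [|| e k, f k | x k == y k]].

Lemma compat_readsE (w : outcome n N L) (j j' : ridx n N) :
  [exists x, compat x (read_of w j').1 && compat x (read_of w j).1] =
  agree_unerased j'.1 j.1 (eraseA w j') (eraseA w j).
Proof.
apply/existsP/forallP => [[x /andP[/forallP cj' /forallP cj]] k | agree].
  move: (cj' k) (cj k); rewrite !ffunE.
  by case: (eraseA w j' k); case: (eraseA w j k) => //= /eqP[->] /eqP[->].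
exists [ffun k => if eraseA w j' k then j.1 k else j'.1 k].
by apply/andP; split; apply/forallP => k; rewrite !ffunE; move: (agree k);
  case: (eraseA w j' k); case: (eraseA w j k) => //= /eqP->.
Qed.

Definition nbhd_count (j : ridx n N) (a : addr_erasures) : R :=
  \sum_(j' | j' != j) (agree_unerased j'.1 j.1 (a j') (a j))%:R.

Lemma nbhd_sizeE (w : outcome n N L) (j : ridx n N) :
  (nbhd_size w j)%:R = nbhd_count j (eraseA w).
Proof.
rewrite /nbhd_size /nbhd_count -sum1_card natr_sum big_mkcond [RHS]big_mkcond /=.
apply: eq_bigr => j' _; rewrite inE compat_readsE.
by case: (_ != _); case: agree_unerased.
Qed.

Definition bern_prod m (b : {ffun 'I_m -> bool}) : R := \prod_i bern p (b i).

Lemma sum_bern : \sum_b bern p b = 1.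
Proof. by rewrite big_bool /= addrC subrK. Qed.

Lemma sum_bern_prod m : \sum_(b : {ffun 'I_m -> bool}) bern_prod b = 1.
Proof. exact: (sum_ffun_prod_eq1 sum_bern). Qed.

Lemma sum_bern_prod_agree (x x' : addr n) (e : {ffun 'I_n -> bool}) :
  \sum_b bern_prod b * (agree_unerased x' x b e)%:R =
  \prod_k (p + (1 - p) * (e k || (x' k == x k))%:R).
Proof.
under [LHS]eq_bigr do rewrite /agree_unerased natr_forall -big_split.
rewrite -(bigA_distr_bigA (fun k c => bern p c * ([|| c, e k | x' k == x k])%:R)).
by apply: eq_bigr => k _; rewrite big_bool /= mulr1.
Qed.

Lemma sum_ridx_agree (x : addr n) (e : {ffun 'I_n -> bool}) :
  \sum_(j' : ridx n N) \prod_k (p + (1 - p) * (e k || (j'.1 k == x k))%:R) =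
  N%:R * \prod_k (if e k then 2 else 1 + p).
Proof.
pose G k c := p + (1 - p) * (e k || (c == x k))%:R.
rewrite -(pair_bigA _ (fun (x' : addr n) (_ : 'I_N) => \prod_k G k (x' k))).
under eq_bigr do rewrite sumr_const card_ord.
rewrite sumrMnl mulr_natl -bigA_distr_bigA.
congr (_ *+ _); apply: eq_bigr => k _; rewrite big_bool /G.
by case: (e k); case: (x k) => /=; ring.
Qed.

Lemma sum_bern_prod_mass m :
  \sum_(b : {ffun 'I_m -> bool}) bern_prod b * \prod_k (if b k then 2 else 1 + p) =
  (1 + 2 * p - p ^+ 2) ^+ m.
Proof.
under eq_bigr do rewrite -big_split.
rewrite -(bigA_distr_bigA (fun _ c => bern p c * (if c then 2 else 1 + p))) /=.
by rewrite prodr_const card_ord big_bool /=; congr (_ ^+ _); ring.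
Qed.

Definition erasure_weight (a : addr_erasures) : R :=
  \prod_j bern_prod (a j).

Lemma sum_erasure_weight_nbhd (j : ridx n N) (e : {ffun 'I_n -> bool}) :
  \sum_(a : addr_erasures | a j == e)
     erasure_weight a * nbhd_count j a =
  bern_prod e * (N%:R * \prod_k (if e k then 2 else 1 + p) - 1).
Proof.
under [LHS]eq_bigr => a /eqP aj do rewrite /nbhd_count aj mulr_sumr.
rewrite exchange_big /=.
under eq_bigr => j' ne.
  rewrite /erasure_weight (sum_ffun_prod_fixed_mul (sum_bern_prod n) _
    (fun b => (agree_unerased j'.1 j.1 b e)%:R) ne) sum_bern_prod_agree.
  over.
have diag : \prod_k (p + (1 - p) * (e k || (j.1 k == j.1 k))%:R) = 1.
  by rewrite big1 // => k _; rewrite eqxx orbT mulr1 addrC subrK.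
rewrite -mulr_sumr -(sum_ridx_agree j.1 e) [in RHS](bigD1 j) //= diag.
by rewrite addrAC subrr add0r.
Qed.

Definition data_weight (d : data_parts) (e : data_erasures) : R :=
  \prod_(x : addr n) (2 ^+ L)^-1 * \prod_j bern_prod (e j).

Lemma weightE d a e :
  weight p ((d, a, e) : outcome n N L) = data_weight d e * erasure_weight a.
Proof. by rewrite /weight big_split /data_weight /erasure_weight /bern_prod /=; ring. Qed.

Lemma sum_data_weight : \sum_d \sum_e data_weight d e = 1.
Proof.
under eq_bigr do rewrite -mulr_sumr (sum_ffun_prod_eq1 (sum_bern_prod L)) mulr1.
have uniform : \sum_(b : {ffun 'I_L -> bool}) (2 ^+ L)^-1 = 1 :> R.
  rewrite sumr_const card_ffun card_bool card_ord -[_ *+ _]mulr_natl natrX mulfV //.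
  by rewrite expf_neq0 // pnatr_eq0.
exact: (sum_ffun_prod_eq1 uniform).
Qed.

Lemma sum_outcome_split (Q : data_parts -> data_erasures -> bool)
    (A : pred addr_erasures) (X : addr_erasures -> R) :
  \sum_(w : outcome n N L | Q (data_of w) (eraseD w) && A (eraseA w))
     weight p w * X (eraseA w) =
  (\sum_d \sum_(e | Q d e) data_weight d e) * \sum_(a | A a) erasure_weight a * X a.
Proof.
rewrite big_mkcond sum_triple mulr_suml /=; apply: eq_bigr => d _.
rewrite exchange_big [in RHS]big_mkcond mulr_suml; apply: eq_bigr => e _ /=.
case: (Q d e) => /=; last by rewrite mul0r big1.
rewrite mulr_sumr [in RHS]big_mkcond; apply: eq_bigr => a _.
by case: (A a); rewrite ?mulr0 // weightE mulrA.
Qed.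

Definition erasure_pattern (v : read n L) : {ffun 'I_n -> bool} :=
  [ffun i => v.1 i == None].

Definition read_rest_eq (j : ridx n N) (v : read n L)
    (d : data_parts) (e : data_erasures) : bool :=
  [forall i, (v.1 i == None) || (v.1 i == Some (j.1 i))] &&
  ([ffun i => if e j i then None else Some (d j.1 i)] == v.2).

Lemma read_of_eqE (w : outcome n N L) (j : ridx n N) (v : read n L) :
  (read_of w j == v) =
  read_rest_eq j v (data_of w) (eraseD w) && (eraseA w j == erasure_pattern v).
Proof.
case: v => y dv; rewrite /read_of /read_rest_eq xpair_eqE /= andbC -andbA andbCA.
congr (_ && _).
apply/eqP/andP => [<- | [/forallP yP /eqP->]].
  by split; [apply/forallP => i | apply/eqP/ffunP => i]; rewrite !ffunE;
    case: (eraseA w j i); rewrite /= ?eqxx ?orbT.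
apply/ffunP => i; rewrite !ffunE; move: (yP i).
by case: (y i) => //= b /eqP[->].
Qed.

End Model.

Theorem lemma5 (R : realFieldType) (n N L : nat) (p : R) :
  (1 <= n)%N -> (1 <= N)%N -> (1 <= L)%N -> 0 < p -> p < 1 ->
  (forall (j : ridx n N) (v : read n L),
     0 < Pr p (fun w : outcome n N L => read_of w j == v) ->
     CondExpect p (fun w => (nbhd_size w j)%:R) (fun w => read_of w j == v)
       = N%:R * 2 ^+ n_erased v * (1 + p) ^+ (n - n_erased v) - 1)
  /\
  (forall j : ridx n N,
     Expect p (fun w : outcome n N L => (nbhd_size w j)%:R)
       = N%:R * (1 + 2 * p - p ^+ 2) ^+ n - 1).
Proof.
move=> _ _ _ _ _; split=> [j v Pr_gt0 | j].
- set e := erasure_pattern v.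
  set K := \sum_d \sum_(e' | read_rest_eq j v d e') data_weight p d e'.
  have PrE : Pr p (fun w : outcome n N L => read_of w j == v) = K * bern_prod p e.
    rewrite /Pr (eq_bigl _ _ (fun w => read_of_eqE w j v)).
    under eq_bigr do rewrite -[weight p _]mulr1.
    rewrite (sum_outcome_split p _ (fun a => a j == e) (fun _ => 1)).
    under [X in _ * X]eq_bigr do rewrite mulr1.
    by rewrite sum_ffun_prod_fixed // sum_bern_prod.
  have Ke_neq0 : K * bern_prod p e != 0 by rewrite -PrE lt0r_neq0.
  rewrite /CondExpect PrE (eq_bigl _ _ (fun w => read_of_eqE w j v)).
  under eq_bigr do rewrite nbhd_sizeE.
  rewrite (sum_outcome_split p _ (fun a => a j == e) (@nbhd_count R _ _ j)).
  rewrite sum_erasure_weight_nbhd mulrA mulrC mulKf //.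
  under eq_bigr do rewrite ffunE.
  by rewrite prod_if_card card_ord mulrA.
- rewrite /Expect; under eq_bigr do rewrite nbhd_sizeE.
  rewrite (sum_outcome_split p (fun _ _ => true) predT (@nbhd_count R _ _ j)).
  rewrite sum_data_weight mul1r.
  rewrite (partition_big (fun a : {ffun ridx n N -> _} => a j) xpredT) //=.
  under eq_bigr do rewrite sum_erasure_weight_nbhd mulrBr mulr1 mulrCA.
  by rewrite sumrB -mulr_sumr sum_bern_prod_mass sum_bern_prod.
Qed.
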